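(* For members $i\in\mathcal N$ with continuous-time dynamics $x'=f_i(x,u)$, $u\in U(x)$, and constraint set $K$, let $H=\bigcap_{i\in\mathcal N}\mathrm{Viab}_i(K)$ and let $\tilde U(x)=\bigcap_{i\in\mathcal N}\tilde U_i(x)$ for $x\in H$, where $\tilde U_i$ is member $i$'s viable regulation map on $\mathrm{Viab}_i(K)$. Then the condition $\mathrm{Dom}(\tilde U)=H$ is not sufficient for $H$ to be a viable set for all members: there exist such data with $\mathrm{Dom}(\tilde U)=H$ but $H$ not viable for some member.
   Context: $\mathrm{Viab}_i(K)$ is the viability kernel of $K$ for member $i$'s system: the set of $x\in K$ from which some evolution of $x'=f_i(x,u)$, $u\in U(x)$, stays in $K$ forever. A viable regulation map $\tilde U_i$ on $\mathrm{Viab}_i(K)$ associates to each state the admissible controls that are viable, i.e. controls $u\in U(x)$ under which the evolution can be kept in $\mathrm{Viab}_i(K)$ (all of $U(x)$ in the interior of the kernel). $\mathrm{Dom}(\tilde U)=\{x:\tilde U(x)\neq\emptyset\}$. A set $H$ is viable for a member if from every $x\in H$ some evolution of that member's system stays in $H$ forever. *)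

From HB Require Import structures.
From mathcomp Require Import all_boot all_order all_algebra.
From mathcomp Require Import all_classical all_reals all_analysis.
Set Implicit Arguments. Unset Strict Implicit. Unset Printing Implicit Defensive.
Import Order.TTheory GRing.Theory Num.Theory.
Import numFieldNormedType.Exports.
Local Open Scope classical_set_scope.
Local Open Scope ring_scope.

Section Viability.
Variables (R : realType) (V : normedModType R) (C : Type).

Definition is_evolution (f : V -> C -> V) (U : V -> set C) (x0 : V)
    (x : R -> V) : Prop :=
  x 0 = x0 /\
  {within [set t : R | 0 <= t], continuous x} /\
  exists u : R -> C, forall t : R, 0 < t ->
    is_derive t 1 x (f (x t) (u t)) /\ U (x t) (u t).

Definition viab_kernel (f : V -> C -> V) (U : V -> set C) (K : set V) : set V :=
  [set x0 | K x0 /\ exists x : R -> V, is_evolution f U x0 x /\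
                     forall t : R, 0 <= t -> K (x t)].

Definition viable_set (f : V -> C -> V) (U : V -> set C) (H : set V) : Prop :=
  forall x0, H x0 -> exists x : R -> V, is_evolution f U x0 x /\
                     forall t : R, 0 <= t -> H (x t).

(* Bouligand contingent cone: liminf_{h->0+} d(x + h v, D)/h = 0. *)
Definition contingent_cone (D : set V) (x : V) : set V :=
  [set v | forall e : R, 0 < e -> forall d : R, 0 < d ->
     exists h : R, 0 < h /\ h < d /\
       exists w : V, `|w - v| < e /\ D (x + h *: w)].

Definition regulation (f : V -> C -> V) (U : V -> set C) (K : set V)
    (x : V) : set C :=
  [set u | viab_kernel f U K x /\ U x u /\
           contingent_cone (viab_kernel f U K) x (f x u)].

Variable I : Type.

Definition common_kernel (f : I -> V -> C -> V) (U : V -> set C) (K : set V)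
  : set V := [set x | forall i, viab_kernel (f i) U K x].

Definition common_regulation (f : I -> V -> C -> V) (U : V -> set C)
    (K : set V) (x : V) : set C :=
  [set u | common_kernel f U K x /\ forall i, regulation (f i) U K x u].

End Viability.

Definition dom_sv {A B : Type} (F : A -> set B) : set A :=
  [set a | F a !=set0].

From HB Require Import structures.
From mathcomp Require Import all_boot all_order all_algebra.
From mathcomp Require Import all_classical all_reals all_analysis.
From mathcomp Require Import lra.
Set Implicit Arguments. Unset Strict Implicit. Unset Printing Implicit Defensive.
Import Order.TTheory GRing.Theory Num.Theory.
Import numFieldNormedType.Exports.
Local Open Scope classical_set_scope.
Local Open Scope ring_scope.

(* In the plane let K be the union of the two coordinate axes, and let member
   [true] move with constant velocity e0 and member [false] with constant
   velocity e1.  The viability kernel of each member is the axis it moves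
   along, so H = {0}.  A kernel invariant under the flow makes every control
   viable, hence Dom(Utilde) = H; but a member with nonzero velocity cannot
   stay at 0, so H is not viable. *)

Section ConstantVelocity.
Variables (R : realType) (V : normedModType R) (C : Type).

Lemma is_derive_line (a e : V) (t : R) :
  is_derive t 1 (fun s : R => a + s *: e) e.
Proof.
rewrite -[e in is_derive _ _ _ e]add0r.
rewrite (_ : (fun s => _) = cst a + *:%R^~ e) //.
apply: is_deriveD; apply: DeriveDef; first exact: diff_derivable.
by rewrite deriveE // diff_val scale1r.
Qed.

Lemma continuous_line (a e : V) : continuous (fun s : R => a + s *: e).
Proof. by move=> s; apply: cvgD; [exact: cvg_cst | exact: scalel_continuous]. Qed.

Lemma viab_kernel_ray (f : V -> C -> V) (U : V -> set C) (K : set V)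
    (e x0 : V) :
  (forall v u, f v u = e) -> (forall v, U v !=set0) ->
  (forall s, 0 <= s -> K (x0 + s *: e)) -> viab_kernel f U K x0.
Proof.
move=> fe Une Kray; split; first by have := Kray 0 (lexx 0); rewrite scale0r addr0.
have [c Uc] := choice Une.
exists (fun s => x0 + s *: e); split => //.
split; first by rewrite scale0r addr0.
split; first exact/continuous_subspaceT/continuous_line.
exists (fun s => c (x0 + s *: e)) => t _.
by rewrite fe; split; [exact: is_derive_line | exact: Uc].
Qed.

Lemma contingent_cone_ray (D : set V) (x v : V) :
  (forall h, 0 < h -> D (x + h *: v)) -> contingent_cone D x v.
Proof.
move=> Dray e e0 d d0; exists (d / 2); split; first by rewrite divr_gt0.
split; first by rewrite ltr_pdivrMr // ltr_pMr // ltr1n.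
by exists v; rewrite subrr normr0; split => //; apply: Dray; rewrite divr_gt0.
Qed.

End ConstantVelocity.

Section CoordinateHyperplanes.
Variables (R : realType) (n : nat) (C : Type).
Implicit Types (f : 'rV[R]_n -> C -> 'rV[R]_n) (U : 'rV[R]_n -> set C).

Lemma closed_coord_eq0 (j : 'I_n) : closed [set v : 'rV[R]_n | v ord0 j = 0].
Proof.
apply: (@preimage_closed _ _ (fun v : 'rV[R]_n => v ord0 j) [set 0]).
  by move=> v _; exact: coord_continuous.
exact: closed_eq.
Qed.

(* The difference quotients eventually lie in the closed hyperplane, hence so
   does their limit. *)
Lemma is_derive_coord_eq0 (x : R -> 'rV[R]_n) (t : R) (d : 'rV[R]_n)
    (j : 'I_n) :
  is_derive t 1 x d -> (\forall s \near t, x s ord0 j = 0) -> d ord0 j = 0.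
Proof.
move=> [dx <-] /nbhs_ballP [e e0 xj0].
apply: (closed_cvg _ (@closed_coord_eq0 j) _ _ dx).
apply/nbhs_ballP; exists e => //= h; rewrite /ball /= sub0r normrN => he _.
rewrite /shift /= !mxE !xj0 ?subrr ?mulr0 //; first exact: ballxx.
by rewrite /ball /= -[h%:A]/(h * 1) mulr1 opprD addrCA subrr addr0 normrN.
Qed.

Lemma evolution_not_near_coord_eq0 f U (x0 : 'rV[R]_n) x (k : 'I_n) (t : R) :
  (forall v u, f v u ord0 k != 0) -> is_evolution f U x0 x -> 0 < t ->
  ~ (\forall s \near t, x s ord0 k = 0).
Proof.
move=> fk [_ [_ [u xu]]] t0 xk0; have [dx _] := xu t t0.
by move: (fk (x t) (u t)); rewrite (is_derive_coord_eq0 dx xk0) eqxx.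
Qed.

Lemma viable_set_coord_eq0 f U (H : set 'rV[R]_n) (k : 'I_n) :
  (forall v u, f v u ord0 k != 0) -> H `<=` [set v | v ord0 k = 0] ->
  viable_set f U H -> H = set0.
Proof.
move=> fk Hk viabH; apply/seteqP; split => // x0 /viabH [x [evx xH]].
apply: (evolution_not_near_coord_eq0 fk evx ltr01).
by near=> s; apply/Hk/xH/ltW; near: s; exact: lt_nbhsr.
Unshelve. all: by end_near.
Qed.

(* Starting off the hyperplane x_j = 0, an evolution stays off it for a short
   while, and meanwhile K forces it onto x_k = 0, which it cannot follow. *)
Lemma viab_kernel_sub_coord_eq0 f U (K : set 'rV[R]_n) (j k : 'I_n) :
  (forall v u, f v u ord0 k != 0) ->
  K `<=` [set v | v ord0 j = 0 \/ v ord0 k = 0] ->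
  viab_kernel f U K `<=` [set v | v ord0 j = 0].
Proof.
move=> fk Kjk x0 [_ [x [evx xK]]]; apply/eqP; apply: contraT => x0j.
have [x00 [xc _]] := evx.
have openj : open [set v : 'rV[R]_n | v ord0 j != 0].
  rewrite (_ : [set v | _] = ~` [set v : 'rV[R]_n | v ord0 j = 0]).
    exact/closed_openC/(@closed_coord_eq0 j).
  by apply/seteqP; split => v /= /eqP.
have : x @ within [set t : R | 0 <= t] (nbhs 0) --> x0.
  have nonneg0 : [set t : R | 0 <= t] 0 by rewrite /= lexx.
  by rewrite -x00 (nbhs_subspace_in nonneg0); exact: xc.
move=> /(_ _ (open_nbhs_nbhs (conj openj x0j))) /nbhs_ballP [e e0 xj].
have e20 : 0 < e / 2 by rewrite divr_gt0.
exfalso; apply: (evolution_not_near_coord_eq0 fk evx e20).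
apply/nbhs_ballP; exists (e / 2) => // s; rewrite /ball /= ltr_distlC => /andP [s0 se].
have s_ge0 : 0 <= s by lra.
have /xj : ball 0 e s by rewrite /ball /= sub0r normrN ger0_norm //; lra.
move=> /(_ s_ge0) /negPf xsj.
by case: (Kjk _ (xK _ s_ge0)) => // /eqP; rewrite xsj.
Qed.

Section Axis.
Variables (f : 'rV[R]_n -> C -> 'rV[R]_n) (U : 'rV[R]_n -> set C).
Variables (K : set 'rV[R]_n) (j k : 'I_n).
Hypotheses (fE : forall v u, f v u = delta_mx ord0 k) (jk : j != k).
Hypothesis (Une : forall v, U v !=set0).
Hypotheses (Kj : [set v : 'rV[R]_n | v ord0 j = 0] `<=` K)
  (Kjk : K `<=` [set v | v ord0 j = 0 \/ v ord0 k = 0]).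

Lemma coord_translate_axis (v : 'rV[R]_n) (s : R) :
  (v + s *: delta_mx ord0 k) ord0 j = v ord0 j.
Proof. by rewrite !mxE eqxx (negPf jk) mulr0 addr0. Qed.

Lemma viab_kernel_axis : viab_kernel f U K = [set v | v ord0 j = 0].
Proof.
apply/seteqP; split.
  by apply: viab_kernel_sub_coord_eq0 Kjk => v u; rewrite fE mxE !eqxx oner_eq0.
move=> x0 x0j; apply: viab_kernel_ray fE Une _ => s _.
by apply: Kj; rewrite /= coord_translate_axis.
Qed.

Lemma regulation_axis (x : 'rV[R]_n) (u : C) :
  x ord0 j = 0 -> U x u -> regulation f U K x u.
Proof.
move=> xj Uxu; rewrite /regulation viab_kernel_axis; split => //; split => //.
by rewrite fE; apply: contingent_cone_ray => h _; rewrite /= coord_translate_axis.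
Qed.

End Axis.
End CoordinateHyperplanes.

Theorem corollary1 (R : realType) :
  exists (n m : nat) (I : finType)
         (f : I -> 'rV[R]_n -> 'rV[R]_m -> 'rV[R]_n)
         (U : 'rV[R]_n -> set 'rV[R]_m) (K : set 'rV[R]_n),
    [/\ closed K,
        (forall x, U x !=set0),
        (forall i, continuous (fun p : 'rV[R]_n * 'rV[R]_m => f i p.1 p.2)),
        dom_sv (common_regulation f U K) = common_kernel f U K &
        exists i : I, ~ viable_set (f i) U (common_kernel f U K)].
Proof.
pose axis (i : bool) : 'I_2 := if i then 0 else 1.
pose f i (v : 'rV[R]_2) (u : 'rV[R]_1) : 'rV[R]_2 := delta_mx ord0 (axis i).
pose U (v : 'rV[R]_2) := [set: 'rV[R]_1].
pose K := [set v : 'rV[R]_2 | v ord0 0 = 0 \/ v ord0 1 = 0].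
have Une v : U v !=set0 by exists 0.
have axisN i : axis (~~ i) != axis i by case: i.
have Kaxis i : [set v : 'rV[R]_2 | v ord0 (axis (~~ i)) = 0] `<=` K.
  by case: i => v; [right | left].
have Kaxes i :
    K `<=` [set v : 'rV[R]_2 | v ord0 (axis (~~ i)) = 0 \/ v ord0 (axis i) = 0].
  by case: i => v; rewrite /K /axis /=; tauto.
have kerE i := viab_kernel_axis (fun _ _ => erefl) (axisN i) Une (Kaxis i) (Kaxes i).
have regE i := regulation_axis (fun _ _ => erefl) (axisN i) Une (Kaxis i) (Kaxes i).
have H0 : common_kernel f U K 0 by move=> i; rewrite kerE /= mxE.
exists 2, 1, bool, f, U, K; split => //.
- by apply: closedU; exact: closed_coord_eq0.
- by move=> i; exact: cst_continuous.
- apply/seteqP; split => x; first by case=> u [].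
  move=> Hx; exists 0; split => // i; apply: regE => //.
  by have := Hx i; rewrite kerE.
- exists true => viabH.
  have fk v u : f true v u ord0 0 != 0 by rewrite mxE oner_eq0.
  have Hsub : common_kernel f U K `<=` [set v | v ord0 0 = 0].
    by move=> v /(_ false); rewrite kerE.
  by have /seteqP [/(_ 0 H0)] := viable_set_coord_eq0 fk Hsub viabH.
Qed.
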